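(* Let $d\ge1$ and consider the cubical cell structure on $\mathbb{R}^d$ given by $\mathbb{Z}^d$. For every integer $m\ge 1$ and all $\mathbb{Z}_2$-valued cochains $\alpha,\beta$ on this cell structure, $$\delta(\alpha\cup_m\beta)=\delta\alpha\cup_m\beta+\alpha\cup_m\delta\beta+\alpha\cup_{m-1}\beta+\beta\cup_{m-1}\alpha,$$ where $\cup_m$ are the hypercubic higher cup products defined in the context.
   Context: Cell structure: the $k$-cells are the integer translates of the $k$-dimensional faces of unit cubes of $\mathbb{Z}^d$. A $k$-cell $c$ spans coordinate directions $i_1<\dots<i_k$. Its subcells are labelled by words $w\in\{+,-,\bullet\}^k$: the cell $c(w)$ fixes $x_{i_r}$ at its maximal (resp. minimal) value on $c$ when $w_r=+$ (resp. $-$), and lets $x_{i_r}$ vary when $w_r=\bullet$. A $\mathbb{Z}_2$-valued $p$-cochain is a function from $p$-cells to $\mathbb{Z}_2$, taken to be zero on cells of other dimensions. The coboundary is $(\delta\alpha)(c)=\sum\alpha(c(w))$ over the words $w$ with exactly one entry in $\{+,-\}$. Higher cup products: for $m\ge0$, a $p$-cochain $\alpha$ and a $q$-cochain $\beta$, and a $k$-cell $c$ with $k=p+q-m$, $$(\alpha\cup_m\beta)(c)=\sum_{1\le l_1<\dots<l_m\le k}\sum_{(w,w')}\alpha(c(w))\beta(c(w')).$$ The inner sum runs over pairs of words with $w_{l_r}=w'_{l_r}=\bullet$ for all $r$. For each position $s\notin\{l_r\}$, let $\ell(s)=\#\{r:l_r<s\}$ and $\sigma_s=(-1)^{\ell(s)}\in\{+,-\}$.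 Then $(w_s,w'_s)\in\{(\sigma_s,\bullet),(\bullet,-\sigma_s)\}$. Terms whose faces have the wrong dimensions for $\alpha$ or $\beta$ vanish. *)

From HB Require Import structures.
From mathcomp Require Import all_boot all_order all_algebra.
Set Implicit Arguments. Unset Strict Implicit. Unset Printing Implicit Defensive.

(* A cell of Z^d: its minimal corner (a point of Z^d) and the set of coordinate
   directions it spans. Its dimension is #|dirs|. *)
Definition cell (d : nat) : Type := ({ffun 'I_d -> int} * {set 'I_d})%type.
Definition cbase d (c : cell d) : {ffun 'I_d -> int} := c.1.
Definition cdirs d (c : cell d) : {set 'I_d} := c.2.

(* Z_2-valued cochains (Z_2 = bool with xor as addition). *)
Definition cochain d := cell d -> bool.
Definition is_pcochain d (p : nat) (a : cochain d) : Prop :=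
  forall c : cell d, #|cdirs c| != p -> a c = false.

(* Letters of words: + , - , bullet *)
Inductive sgn := Plus | Minus | Dot.
Definition sgn_to (x : sgn) : 'I_3 :=
  match x with Plus => inord 0 | Minus => inord 1 | Dot => inord 2 end.
Definition sgn_of (i : 'I_3) : sgn :=
  match val i with 0 => Plus | 1 => Minus | _ => Dot end.
Lemma sgn_toK : cancel sgn_to sgn_of.
Proof. by case; rewrite /sgn_of /= inordK. Qed.
HB.instance Definition _ := Finite.copy sgn (can_type sgn_toK).

Definition sgn_neg (x : sgn) : sgn :=
  match x with Plus => Minus | Minus => Plus | Dot => Dot end.

(* Words on a k-cell with directions S = {i_1 < ... < i_k}: a word assigns a
   letter to each direction of S (position r <-> direction i_r, which preserves
   the order); we normalize it to be Dot outside S. *)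
Notation word d := {ffun 'I_d -> sgn}.
Definition word_on d (S : {set 'I_d}) (w : word d) : bool :=
  [forall i, (i \notin S) ==> (w i == Dot)].

Definition face d (c : cell d) (w : word d) : cell d :=
  ([ffun i => (cbase c i + (if (i \in cdirs c) && (w i == Plus) then 1 else 0))%R],
   [set i in cdirs c | w i == Dot]).

Definition cobound d (a : cochain d) : cochain d := fun c =>
  \big[addb/false]_(w : word d | word_on (cdirs c) w && (#|[set i in cdirs c | w i != Dot]| == 1))
     a (face c w).

Definition sigma d (L : {set 'I_d}) (s : 'I_d) : sgn :=
  if odd #|[set l in L | l < s]| then Minus else Plus.

Definition cup_pair d (S L : {set 'I_d}) (w w' : word d) : bool :=
  [forall i, (i \in L) ==> (w i == Dot) && (w' i == Dot)] &&
  [forall s, ((s \in S) && (s \notin L)) ==>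
     (((w s == sigma L s) && (w' s == Dot)) ||
      ((w s == Dot) && (w' s == sgn_neg (sigma L s))))].

(* Higher cup product a \cup_m b.  (It automatically vanishes on cells of
   dimension other than p+q-m when a, b are p-, q-cochains.) *)
Definition cup d (m : nat) (a b : cochain d) : cochain d := fun c =>
  \big[addb/false]_(L : {set 'I_d} | (L \subset cdirs c) && (#|L| == m))
   \big[addb/false]_(w : word d | word_on (cdirs c) w)
    \big[addb/false]_(w' : word d | word_on (cdirs c) w' && cup_pair (cdirs c) L w w')
      (a (face c w) && b (face c w')).

From mathcomp Require Import all_boot all_order all_algebra.

Set Implicit Arguments. Unset Strict Implicit. Unset Printing Implicit Defensive.

(* Expanding the coboundary and the cup products, each of the five terms becomes a sum over
   pairs of words (x, y) on the cell of [a (face c x) && b (face c y)], weighted by a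
   coefficient that depends only on x and y; so the identity is one between coefficients.
   If some position carries a letter in both x and y, only the terms that remove this letter
   survive, and they agree.  Otherwise the sign rule of the cup product, read at the
   positions that are not common bullets, defines a bit g(s).  Turning the letter at t into
   a bullet flips the sign rule exactly at the positions after t, so the terms of
   [da \cup b] and [a \cup db] count the t for which g(s) = [t < s], while the two
   [\cup_{m-1}] terms detect g = 0 and g = 1; in total this is always even. *)

Lemma sgn_eqE (x y : sgn) :
  (x == y) = match x, y with
             | Plus, Plus | Minus, Minus | Dot, Dot => true | _, _ => false end.
Proof. by apply/eqP/idP => [->|]; case: x; case: y. Qed.

Lemma big_addb_mkcondr (I : finType) (P Q : pred I) (F : I -> bool) :
  \big[addb/false]_(i | P i && Q i) F i = \big[addb/false]_(i | P i) (Q i && F i).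
Proof. by rewrite big_mkcondr; apply: eq_bigr => i _; case: (Q i). Qed.

Lemma forall_setU1 (T : finType) (a : T) (A : {set T}) (P : pred T) :
  [forall x in a |: A, P x] = P a && [forall x in A, P x].
Proof.
apply/forall_inP/andP => [allP | [Pa /forall_inP allA] x]; last first.
  by rewrite !inE => /predU1P[->|/allA].
by split; [apply: allP; rewrite setU11 | apply/forall_inP => x xA; apply: allP; rewrite setU1r].
Qed.

Lemma forall_set0 (T : finType) (P : pred T) : [forall x in set0, P x].
Proof. by apply/forall_inP => x; rewrite inE. Qed.

(* If g reads 0...01...1 on G, the admissible t are its last 0 and its first 1 (only one of
   them when g is constant); otherwise there is none. *)
Lemma step_cuts_parity n (G : {set 'I_n}) (g : 'I_n -> bool) :
  \big[addb/false]_(t in G) [forall s in G :\ t, g s == (t < s)] =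
  [forall s in G, ~~ g s] (+) [forall s in G, g s].
Proof.
elim: {G}_.+1 {-2}G (ltnSn #|G|) => // N IH G GN.
have [->|[t0 t0G]] := set_0Vmem G; first by rewrite big_set0 !forall_set0.
case: (arg_maxnP (fun i : 'I_n => val i) t0G) => f fG fmax; have {}fG : f \in G := fG.
set H := G :\ f; have -> : G = f |: H by rewrite setD1K.
have fH : f \notin H by rewrite setD11.
have Hlt s : s \in H -> s < f.
  by move=> /setD1P[sf sG]; rewrite ltn_neqAle; apply/andP; split; [exact: sf | exact: fmax].
have /IH IHH : #|H| < N by rewrite -ltnS; apply: leq_trans GN; rewrite ltnS (cardsD1 f G) fG.
rewrite big_setU1 //= setU1K // !forall_setU1.
have -> : [forall s in H, g s == (f < s)] = [forall s in H, ~~ g s].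
  by apply: eq_forallb_in => s /Hlt sf; rewrite ltnNge ltnW.
rewrite (eq_bigr (fun t => g f && [forall s in H :\ t, g s == (t < s)])) => [|t tH]; last first.
  have -> : (f |: H) :\ t = f |: (H :\ t).
    apply/setP => s; rewrite !inE; case: (eqVneq s f) => // ->.
    by rewrite orTb andbT; apply: contraTneq (Hlt t tH) => ->; rewrite ltnn.
  by rewrite forall_setU1 Hlt ?eqb_id.
rewrite -big_distrr /= IHH.
by case: (g f); case: [forall s in H, ~~ g s]; case: [forall s in H, g s].
Qed.

Section HigherCup.
Variable d : nat.
Implicit Types (S L : {set 'I_d}) (c : cell d) (s t : 'I_d) (e p q sg : sgn) (w x y u v : word d).

Definition dot_word : word d := [ffun => Dot].
Definition set_letter w t e : word d := [ffun i => if i == t then e else w i].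
Definition comp_word w v : word d := [ffun i => if w i == Dot then v i else w i].

Lemma set_letter_eq w t e : set_letter w t e t = e.
Proof. by rewrite ffunE eqxx. Qed.

Lemma set_letter_neq w t e s : s != t -> set_letter w t e s = w s.
Proof. by rewrite ffunE => /negbTE->. Qed.

Lemma set_letter_id w t e : w t = e -> set_letter w t e = w.
Proof. by move=> <-; apply/ffunP => i; rewrite ffunE; case: eqP => [->|]. Qed.

Lemma set_letterKs w t e e' : set_letter (set_letter w t e) t e' = set_letter w t e'.
Proof. by apply/ffunP => i; rewrite !ffunE; case: eqP. Qed.

Lemma set_letter_eqE w t e : (set_letter w t e == w) = (w t == e).
Proof.
by apply/eqP/eqP => [<-|/set_letter_id//]; rewrite set_letter_eq.
Qed.

Lemma word_on_set_letter S w t e : t \in S -> word_on S (set_letter w t e) = word_on S w.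
Proof.
move=> tS; apply: eq_forallb => i.
by case: (eqVneq i t) => [->|it]; rewrite ?tS // set_letter_neq.
Qed.

Lemma word_on_setD1 S w t : t \in S -> word_on (S :\ t) w = word_on S w && (w t == Dot).
Proof.
move=> tS; apply/forallP/andP => [onSt|[/forallP onS wt] i].
  split; last by have := onSt t; rewrite !inE eqxx.
  by apply/forallP => i; apply/implyP => iS; have := onSt i; rewrite !inE (negbTE iS) andbF.
by rewrite !inE negb_and negbK; case: (eqVneq i t) => [->|_] //=; apply: onS.
Qed.

Lemma cdirs_face c w : cdirs (face c w) = [set i in cdirs c | w i == Dot].
Proof. by []. Qed.

Lemma face_comp c w v : face (face c w) v = face c (comp_word w v).
Proof.
rewrite /face /cbase /cdirs /=; congr pair; last first.
  by apply/setP => i; rewrite !inE ffunE !sgn_eqE; case: (i \in c.2); case: (w i); case: (v i).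
apply/ffunP => i; rewrite !ffunE !inE !sgn_eqE.
by case: (i \in c.2); case: (w i); case: (v i); rewrite /= ?GRing.addr0.
Qed.

Lemma comp_dot_set_letter v t e :
  e != Dot -> comp_word (set_letter dot_word t e) v = set_letter v t e.
Proof.
move=> eD; apply/ffunP => i; rewrite !ffunE.
by case: (eqVneq i t) => [->|]; rewrite ?(negbTE eD) ?eqxx.
Qed.

Lemma comp_set_letter w t e :
  w t = Dot -> comp_word w (set_letter dot_word t e) = set_letter w t e.
Proof.
move=> wt; apply/ffunP => i; rewrite !ffunE.
by case: (eqVneq i t) => [->|]; rewrite ?wt ?eqxx // => _; case: eqP.
Qed.

Lemma big_word_on_setD1 S t e (F : word d -> word d -> bool) : t \in S ->
  \big[addb/false]_(u | word_on (S :\ t) u) F u (set_letter u t e) =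
  \big[addb/false]_(x | word_on S x && (x t == e)) F (set_letter x t Dot) x.
Proof.
move=> tS.
rewrite (reindex_onto (fun x => set_letter x t Dot) (fun u => set_letter u t e)) /=; last first.
  by move=> u; rewrite word_on_setD1 // => /andP[_ /eqP ut]; rewrite set_letterKs set_letter_id.
apply: eq_big => [x | x /andP[_]]; rewrite set_letterKs set_letter_eqE //.
  by rewrite word_on_setD1 // word_on_set_letter // set_letter_eq eqxx andbT.
by move=> /eqP/set_letter_id->.
Qed.

Lemma coboundE (a : cochain d) c : cobound a c =
  \big[addb/false]_(t in cdirs c) \big[addb/false]_(e | e != Dot)
     a (face c (set_letter dot_word t e)).
Proof.
set S := cdirs c; set one_letter := fun w => word_on S w && (#|[set i in S | w i != Dot]| == 1).
have one_letterE w t e : t \in S -> e != Dot ->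
    (one_letter w && (w t == e)) = (w == set_letter dot_word t e).
  move=> tS eD; apply/idP/eqP => [/andP[/andP[onS /cards1P[t0 Nw]] /eqP wt]|->].
    have t0t : t = t0 by apply/set1P; rewrite -Nw inE tS wt.
    apply/ffunP => i; rewrite !ffunE; case: eqP => [->//|it].
    have /implyP := forallP onS i; case: (boolP (i \in S)) => iS; last by move=> /(_ isT) /eqP.
    move=> _; apply/eqP/negPn/negP => wi; apply: it.
    by rewrite t0t; apply/set1P; rewrite -Nw inE iS wi.
  rewrite /one_letter word_on_set_letter // set_letter_eq eqxx andbT; apply/andP; split.
    by apply/forallP => i; apply/implyP => _; rewrite !ffunE; case: eqP.
  apply/cards1P; exists t; apply/setP => i; rewrite !inE ffunE.
  by case: (eqVneq i t) => [->|_]; rewrite ?tS ?eD ?ffunE ?eqxx /= ?andbF.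
transitivity (\big[addb/false]_(w | one_letter w)
                \big[addb/false]_(t in S) ((w t != Dot) && a (face c w))).
  apply: eq_bigr => w /andP[_ /cards1P[t0 Nw]].
  rewrite -big_addb_mkcondr (eq_bigl (mem [set t0])) ?big_set1 // => t.
  by rewrite -Nw !inE.
rewrite (exchange_big _ _ _ _ _ (fun w t => (w t != Dot) && a (face c w))) /=.
apply: eq_bigr => t tS.
rewrite -big_addb_mkcondr (partition_big (fun w => w t) (fun e => e != Dot)) => [|w /andP[]//].
apply: eq_bigr => e eD; rewrite (big_pred1 (set_letter dot_word t e)) // => w /=.
by rewrite -one_letterE // -andbA; case: (w t =P e) => [->|_]; rewrite ?eD ?andbF.
Qed.

Lemma cobound_faceE (a : cochain d) c w : cobound a (face c w) =
  \big[addb/false]_(t in cdirs c)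
     ((w t == Dot) && \big[addb/false]_(e | e != Dot) a (face c (set_letter w t e))).
Proof.
rewrite coboundE cdirs_face big_mkcond [RHS]big_mkcond; apply: eq_bigr => t _.
rewrite inE; case: (t \in cdirs c); case: eqP => //= wt.
by apply: eq_bigr => e _; rewrite face_comp comp_set_letter.
Qed.

Definition common_dots S x y := [set i in S | (x i == Dot) && (y i == Dot)].

Definition cup_kernel (k : nat) S x y :=
  (#|common_dots S x y| == k) && cup_pair S (common_dots S x y) x y.

Lemma cup_pair_common_dots S L x y :
  L \subset S -> cup_pair S L x y -> L = common_dots S x y.
Proof.
move=> LS /andP[/forallP dotL /forallP signs]; apply/setP => i; rewrite inE.
case: (boolP (i \in L)) => iL.
  by have /andP[-> ->] := implyP (dotL i) iL; rewrite (subsetP LS).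
case: (boolP (i \in S)) => //= iS; have := implyP (signs i); rewrite iS iL => /(_ isT).
by rewrite /sigma !sgn_eqE; case: odd; case: (x i); case: (y i).
Qed.

Lemma big_cup_pair (k : nat) S x y :
  \big[addb/false]_(L : {set 'I_d} | (L \subset S) && (#|L| == k)) cup_pair S L x y =
  cup_kernel k S x y.
Proof.
have DS : common_dots S x y \subset S by apply/subsetP => i; rewrite inE => /andP[].
case: (boolP (cup_kernel k S x y)) => [/andP[Dk DP]|notK].
  rewrite (bigD1 (common_dots S x y)) /= ?DS ?Dk // DP big1 // => L /andP[/andP[LS _] LD].
  by apply: contraNF LD => /(cup_pair_common_dots LS) ->.
apply: big1 => L /andP[LS /eqP Lk]; apply: contraNF notK => LP.
by rewrite /cup_kernel -(cup_pair_common_dots LS LP) Lk eqxx.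
Qed.

Definition pair_sum S (f g : word d -> bool) (K : word d -> word d -> bool) :=
  \big[addb/false]_(x | word_on S x) \big[addb/false]_(y | word_on S y) [&& K x y, f x & g y].

Lemma cupE k (a b : cochain d) c :
  cup k a b c = pair_sum (cdirs c) (a \o face c) (b \o face c) (cup_kernel k (cdirs c)).
Proof.
rewrite /cup /pair_sum exchange_big; apply: eq_bigr => x _.
under eq_bigr => L _ do rewrite big_addb_mkcondr.
rewrite exchange_big; apply: eq_bigr => y _.
by rewrite -big_distrl big_cup_pair.
Qed.

Lemma pair_sumC S f g K : pair_sum S f g K = pair_sum S g f (fun y x => K x y).
Proof.
rewrite /pair_sum exchange_big; apply: eq_bigr => y _; apply: eq_bigr => x _.
by rewrite [f x && _]andbC.
Qed.

Lemma pair_sum_addb S f g K1 K2 :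
  pair_sum S f g K1 (+) pair_sum S f g K2 = pair_sum S f g (fun x y => K1 x y (+) K2 x y).
Proof.
rewrite /pair_sum -big_split; apply: eq_bigr => x _.
by rewrite -big_split; apply: eq_bigr => y _; rewrite andb_addl.
Qed.

Lemma big_word_on_cobound_face (a : cochain d) c (K : word d -> bool) :
  \big[addb/false]_(w | word_on (cdirs c) w) (K w && cobound a (face c w)) =
  \big[addb/false]_(x | word_on (cdirs c) x)
     ((\big[addb/false]_(t in cdirs c) ((x t != Dot) && K (set_letter x t Dot)))
      && a (face c x)).
Proof.
set S := cdirs c.
transitivity (\big[addb/false]_(t in S) \big[addb/false]_(e | e != Dot)
    \big[addb/false]_(w | word_on (S :\ t) w) (K w && a (face c (set_letter w t e)))).
  under eq_bigr => w _ do rewrite cobound_faceE big_distrr /=.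
  rewrite exchange_big /=; apply: eq_bigr => t tS.
  under eq_bigr => w _ do rewrite /= andbCA big_distrr /=.
  rewrite -big_addb_mkcondr exchange_big; apply: eq_bigr => e _.
  by apply: eq_bigl => w; rewrite word_on_setD1.
transitivity (\big[addb/false]_(t in S) \big[addb/false]_(x | word_on S x && (x t != Dot))
    (K (set_letter x t Dot) && a (face c x))).
  apply: eq_bigr => t tS.
  rewrite (partition_big (fun x => x t) (fun e => e != Dot)) => [|x /andP[]//].
  apply: eq_bigr => e eD; rewrite (@big_word_on_setD1 S t e (fun u u' => K u && a (face c u'))) //.
  by apply: eq_bigl => x; case: (x t =P e) => [->|]; rewrite ?eD ?andbT ?andbF.
under eq_bigr => t _ do rewrite big_addb_mkcondr.
rewrite exchange_big; apply: eq_bigr => x _; rewrite big_distrl /=.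
by apply: eq_bigr => t _; rewrite andbA.
Qed.

Lemma pair_sum_cobound_l (a : cochain d) c g K :
  pair_sum (cdirs c) (cobound a \o face c) g K =
  pair_sum (cdirs c) (a \o face c) g
    (fun x y => \big[addb/false]_(t in cdirs c) ((x t != Dot) && K (set_letter x t Dot) y)).
Proof.
rewrite /pair_sum exchange_big [RHS]exchange_big; apply: eq_bigr => y _ /=.
under eq_bigr => x _ do rewrite andbCA andbC.
rewrite big_word_on_cobound_face; apply: eq_bigr => x _.
under eq_bigr => t _ do rewrite andbA.
by rewrite -big_distrl /= -andbA [g y && _]andbC.
Qed.

Lemma pair_sum_cobound_r (b : cochain d) c f K :
  pair_sum (cdirs c) f (cobound b \o face c) K =
  pair_sum (cdirs c) f (b \o face c)
    (fun x y => \big[addb/false]_(t in cdirs c) ((y t != Dot) && K x (set_letter y t Dot))).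
Proof. by rewrite pair_sumC pair_sum_cobound_l pair_sumC. Qed.

Definition cobound_cup_kernel m S x y := \big[addb/false]_(t in S)
  [&& x t != Dot, y t == x t & cup_kernel m (S :\ t) (set_letter x t Dot) (set_letter y t Dot)].

Definition cup_cobound_l_kernel m S x y :=
  \big[addb/false]_(t in S) ((x t != Dot) && cup_kernel m S (set_letter x t Dot) y).

Definition cup_cobound_r_kernel m S x y :=
  \big[addb/false]_(t in S) ((y t != Dot) && cup_kernel m S x (set_letter y t Dot)).

Lemma cobound_cupE m (a b : cochain d) c :
  cobound (cup m a b) c =
  pair_sum (cdirs c) (a \o face c) (b \o face c) (cobound_cup_kernel m (cdirs c)).
Proof.
set S := cdirs c.
set K := fun t x y => cup_kernel m (S :\ t) (set_letter x t Dot) (set_letter y t Dot).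
transitivity (\big[addb/false]_(t in S) \big[addb/false]_(x | word_on S x && (x t != Dot))
    \big[addb/false]_(y | word_on S y && (y t == x t)) [&& K t x y, a (face c x) & b (face c y)]).
  rewrite coboundE; apply: eq_bigr => t tS.
  rewrite [RHS](partition_big (fun x => x t) (fun e => e != Dot)) => [|x /andP[]//].
  apply: eq_bigr => e eD.
  have dirs_te : cdirs (face c (set_letter dot_word t e)) = S :\ t.
    apply/setP => i; rewrite !inE ffunE.
    by case: (eqVneq i t) => [->|]; rewrite ?(negbTE eD) ?ffunE ?eqxx /= ?andbF ?andbT.
  rewrite cupE dirs_te /pair_sum /=.
  under eq_bigr => u _ do under eq_bigr => v _ do rewrite !face_comp !comp_dot_set_letter //.
  rewrite (@big_word_on_setD1 S t e (fun u x => \big[addb/false]_(v | word_on (S :\ t) v)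
     [&& cup_kernel m (S :\ t) u v, a (face c x) & b (face c (set_letter v t e))])) //.
  apply: eq_big => [x | x /andP[_ /eqP xt]].
    by case: (x t =P e) => [->|]; rewrite ?eD ?andbT ?andbF.
  by rewrite xt (@big_word_on_setD1 S t e (fun v y =>
     [&& cup_kernel m (S :\ t) (set_letter x t Dot) v, a (face c x) & b (face c y)])).
under eq_bigr => t _ do rewrite big_addb_mkcondr.
rewrite exchange_big; apply: eq_bigr => x _.
under eq_bigr => t _ do rewrite big_addb_mkcondr big_distrr /=.
rewrite exchange_big; apply: eq_bigr => y _ /=.
by rewrite /cobound_cup_kernel big_distrl /=; apply: eq_bigr => t _; rewrite !andbA.
Qed.

Lemma sigma_neq_Dot L s : sigma L s != Dot.
Proof. by rewrite /sigma sgn_eqE; case: odd. Qed.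

Lemma sigma_setU1 L t s : t \notin L ->
  sigma (t |: L) s = if t < s then sgn_neg (sigma L s) else sigma L s.
Proof.
move=> tL; rewrite /sigma.
have [ts|st] := boolP (t < s).
  have -> : [set l in t |: L | l < s] = t |: [set l in L | l < s].
    by apply/setP => l; rewrite !inE; case: (eqVneq l t) => [->|].
  by rewrite cardsU1 inE (negbTE tL) /=; case: odd.
suff -> : [set l in t |: L | l < s] = [set l in L | l < s] by [].
by apply/setP => l; rewrite !inE; case: (eqVneq l t) => [->|] //=; rewrite (negbTE st) andbF.
Qed.

Definition pair_ok sg p q := ((p == sg) && (q == Dot)) || ((p == Dot) && (q == sgn_neg sg)).

Lemma pair_ok_neg sg p q : sg != Dot -> (p == Dot) != (q == Dot) ->
  pair_ok (sgn_neg sg) p q = ~~ pair_ok sg p q.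
Proof. by rewrite /pair_ok !sgn_eqE; case: sg; case: p; case: q. Qed.

Lemma pair_okC sg p q : sg != Dot -> (p == Dot) != (q == Dot) ->
  pair_ok sg q p = ~~ pair_ok sg p q.
Proof. by rewrite /pair_ok !sgn_eqE; case: sg; case: p; case: q. Qed.

Lemma common_dotsC S x y : common_dots S y x = common_dots S x y.
Proof. by apply/setP => i; rewrite !inE [(y i == Dot) && _]andbC. Qed.

Lemma eq_common_dots S x x' y y' : {in S, x =1 x'} -> {in S, y =1 y'} ->
  common_dots S x y = common_dots S x' y'.
Proof.
by move=> ex ey; apply/setP => i; rewrite !inE; case: (boolP (i \in S)) => // iS; rewrite ex ?ey.
Qed.

Lemma cup_kernelE k S x y : cup_kernel k S x y =
  (#|common_dots S x y| == k) &&
  [forall s in S :\: common_dots S x y,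
     pair_ok (sigma (common_dots S x y) s) (x s) (y s)].
Proof.
rewrite /cup_kernel /cup_pair; congr andb.
rewrite (_ : [forall i, _ ==> _] = true); last by apply/forall_inP => i; rewrite inE => /andP[].
by apply: eq_forallb => s; rewrite in_setD andbC.
Qed.

Lemma eq_cup_kernel k S x x' y y' : {in S, x =1 x'} -> {in S, y =1 y'} ->
  cup_kernel k S x y = cup_kernel k S x' y'.
Proof.
move=> ex ey; rewrite !cup_kernelE (eq_common_dots ex ey); congr andb.
by apply: eq_forallb_in => s /setDP[sS _]; rewrite ex ?ey.
Qed.

Lemma cup_kernel_clash k S x y s : s \in S -> x s != Dot -> y s != Dot ->
  cup_kernel k S x y = false.
Proof.
move=> sS xs ys; rewrite cup_kernelE; apply/negbTE/nandP; right.
apply/negP => /forall_inP/(_ s); rewrite !inE sS (negbTE xs) /= => /(_ isT).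
by rewrite /pair_ok (negbTE xs) (negbTE ys) !andbF.
Qed.

Lemma cup_kernel_setD1 k S x y t : t \in S -> ~~ ((x t == Dot) && (y t == Dot)) ->
  cup_kernel k S x y =
  pair_ok (sigma (common_dots (S :\ t) x y) t) (x t) (y t) && cup_kernel k (S :\ t) x y.
Proof.
move=> tS ntD; set D := common_dots (S :\ t) x y.
have DS : common_dots S x y = D.
  apply/setP => i; rewrite !inE; case: (eqVneq i t) => [->|] //=.
  by rewrite (negbTE ntD) andbF.
have SD : S :\: D = t |: (S :\ t) :\: D.
  by apply/setP => i; rewrite !inE; case: (eqVneq i t) => [->|]; rewrite ?tS ?andbF.
by rewrite !cup_kernelE DS -/D SD forall_setU1 andbCA.
Qed.

Definition clash_free S x y := [forall s in S, (x s == Dot) || (y s == Dot)].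

Lemma clash_free_one_dot S x y s : clash_free S x y ->
  s \in S :\: common_dots S x y -> (x s == Dot) != (y s == Dot).
Proof.
move=> /forall_inP cf; rewrite !inE negb_and => /andP[sD sS].
by move: (cf s sS) sD; rewrite sS; case: (x s == Dot); case: (y s == Dot).
Qed.

Lemma cup_kernel_dot_letter k S x y t : clash_free S x y ->
  t \in S :\: common_dots S x y ->
  cup_kernel k S (set_letter x t Dot) (set_letter y t Dot) =
  (#|common_dots S x y|.+1 == k) &&
  [forall s in (S :\: common_dots S x y) :\ t,
     ~~ pair_ok (sigma (common_dots S x y) s) (x s) (y s) == (t < s)].
Proof.
move=> cf tSD; set D := common_dots S x y.
have tD : t \notin D by move: tSD; rewrite inE => /andP[].
have D' : common_dots S (set_letter x t Dot) (set_letter y t Dot) = t |: D.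
  apply/setP => i; rewrite !inE; case: (eqVneq i t) => [->|it].
    by rewrite !set_letter_eq eqxx; move: tSD; rewrite inE => /andP[_ ->].
  by rewrite !set_letter_neq.
have SD' : S :\: (t |: D) = (S :\: D) :\ t.
  by apply/setP => i; rewrite !inE negb_or -andbA.
rewrite cup_kernelE D' SD' cardsU1 tD; congr andb.
apply: eq_forallb_in => s /setD1P[st sSD].
rewrite !set_letter_neq // sigma_setU1 //.
case: (t < s); rewrite ?pair_ok_neg ?sigma_neq_Dot ?(clash_free_one_dot cf sSD) //.
by rewrite eqbF_neg negbK.
Qed.

Lemma cup_kernel_coboundary_clash m S x y t0 :
  t0 \in S -> x t0 != Dot -> y t0 != Dot ->
  cobound_cup_kernel m S x y =
  cup_cobound_l_kernel m S x y (+) cup_cobound_r_kernel m S x y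
  (+) cup_kernel m.-1 S x y (+) cup_kernel m.-1 S y x.
Proof.
move=> t0S xt0 yt0; rewrite /cobound_cup_kernel /cup_cobound_l_kernel /cup_cobound_r_kernel.
rewrite (cup_kernel_clash _ t0S xt0 yt0) (cup_kernel_clash _ t0S yt0 xt0) !addbF.
have off t w : t != t0 -> set_letter w t Dot t0 = w t0.
  by move=> tt0; rewrite set_letter_neq // eq_sym.
rewrite !(bigD1 t0 t0S) /= !big1 ?addbF; try move=> t /andP[_ tt0];
  try by rewrite (@cup_kernel_clash _ _ _ _ t0) ?andbF ?off // in_setD1 eq_sym tt0.
have agree w : {in S :\ t0, set_letter w t0 Dot =1 w}.
  by move=> s /setD1P[st0 _]; apply: set_letter_neq.
have same w : {in S :\ t0, w =1 w} by [].
rewrite xt0 yt0 /= !(cup_kernel_setD1 _ t0S) ?set_letter_eq ?eqxx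
  ?(negbTE xt0) ?(negbTE yt0) ?andbF //.
rewrite !(eq_cup_kernel _ (agree x) (agree y)) !(eq_cup_kernel _ (agree x) (same y)).
rewrite !(eq_cup_kernel _ (same x) (agree y)) !(eq_common_dots (agree x) (same y)).
rewrite !(eq_common_dots (same x) (agree y)).
move: xt0 yt0; rewrite /pair_ok /sigma !sgn_eqE.
by case: odd; case: (x t0); case: (y t0); case: cup_kernel.
Qed.

Lemma cup_kernel_coboundary_clash_free m S x y : 0 < m -> clash_free S x y ->
  cobound_cup_kernel m S x y =
  cup_cobound_l_kernel m S x y (+) cup_cobound_r_kernel m S x y
  (+) cup_kernel m.-1 S x y (+) cup_kernel m.-1 S y x.
Proof.
move=> m_gt0 cf; rewrite /cobound_cup_kernel /cup_cobound_l_kernel /cup_cobound_r_kernel.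
set D := common_dots S x y.
set mismatch := fun s => ~~ pair_ok (sigma D s) (x s) (y s).
have /forall_inP cf' := cf.
rewrite big1 => [|t tS]; last first.
  by apply/and3P => -[xt /eqP yt _]; move: (cf' t tS); rewrite yt orbb (negbTE xt).
rewrite -big_split /=.
rewrite (eq_bigr (fun t => (t \in S :\: D) &&
           cup_kernel m S (set_letter x t Dot) (set_letter y t Dot))) => [|t tS]; last first.
  rewrite !inE tS /=.
  have := cf' t tS; case xt: (x t == Dot); case yt: (y t == Dot) => //= _.
    by rewrite (set_letter_id (eqP xt)).
  by rewrite (set_letter_id (eqP yt)) addbF.
rewrite -big_addb_mkcondr (eq_bigl (mem (S :\: D))) => [|t]; last first.
  by rewrite andb_idl // => /setDP[].
rewrite (eq_bigr (fun t => (#|D|.+1 == m) &&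
           [forall s in (S :\: D) :\ t, mismatch s == (t < s)])) => [|t tSD]; last first.
  exact: cup_kernel_dot_letter.
rewrite -big_distrr /= step_cuts_parity !cup_kernelE (common_dotsC S x y) -/D.
have -> : [forall s in S :\: D, pair_ok (sigma D s) (y s) (x s)] =
          [forall s in S :\: D, mismatch s].
  by apply: eq_forallb_in => s sSD; rewrite pair_okC ?sigma_neq_Dot ?(clash_free_one_dot cf sSD).
have -> : [forall s in S :\: D, ~~ mismatch s] =
          [forall s in S :\: D, pair_ok (sigma D s) (x s) (y s)].
  by apply: eq_forallb_in => s _; rewrite negbK.
have -> : (#|D|.+1 == m) = (#|D| == m.-1) by case: m m_gt0.
by case: (#|D| == m.-1); case: [forall s in _, _]; case: [forall s in _, _].
Qed.

Lemma cup_kernel_coboundary m S x y : 0 < m ->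
  cobound_cup_kernel m S x y =
  cup_cobound_l_kernel m S x y (+) cup_cobound_r_kernel m S x y
  (+) cup_kernel m.-1 S x y (+) cup_kernel m.-1 S y x.
Proof.
move=> m_gt0; have [cf|] := boolP (clash_free S x y); first exact: cup_kernel_coboundary_clash_free.
rewrite negb_forall_in => /exists_inP[t0 t0S]; rewrite negb_or => /andP[xt0 yt0].
exact: (cup_kernel_coboundary_clash _ t0S xt0 yt0).
Qed.

End HigherCup.

Theorem proposition2 (d : nat) (hd : (1 <= d)%N) (m : nat) (hm : (1 <= m)%N)
  (p q : nat) (a b : cochain d) (ha : is_pcochain p a) (hb : is_pcochain q b) :
  forall c : cell d,
    cobound (cup m a b) c =
    cup m (cobound a) b c (+) cup m a (cobound b) c (+)
    cup m.-1 a b c (+) cup m.-1 b a c.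
Proof.
move=> c; rewrite cobound_cupE !cupE pair_sum_cobound_l pair_sum_cobound_r.
rewrite [X in _ (+) X]pair_sumC !pair_sum_addb.
apply: eq_bigr => x _; apply: eq_bigr => y _; congr andb.
exact: cup_kernel_coboundary.
Qed.
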